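(* Let $\{G(n)\}$ be a sequence of random intersection graphs with $\mathbb E\,Y(n)^2=O(1)$, and let $R(n)$ be the number of $4$-sets $S\subseteq V(G(n))$ that witness a rainbow $K_4$ in $G(n)$. Then $\mathbb E\,R(n)\le(\mathbb E\,Y(n)^2)^4/4!=O(1)$. Furthermore, if for some positive sequence $\varepsilon_n\to0$ we have $n\,\mathbb P(Y(n)\ge\varepsilon_n n^{1/2})\to0$, then with probability tending to $1$, $G(n)$ contains no rainbow $K_4$.
   Context: Random intersection graph: given positive integers $n,m$ and a probability measure $P$ on $\{0,\dots,m\}$, $G(n,m,P)$ has vertex set $V=[n]$ and attribute set $W=\{w_1,\dots,w_m\}$; independent random subsets $S_1,\dots,S_n\subseteq W$ with $\mathbb P(S_v=S)=P(|S|)/\binom{m}{|S|}$; distinct $u,v$ adjacent iff $S_u\cap S_v\ne\emptyset$. For a sequence $G(n)=G(n,m(n),P(n))$ with $m(n)\to\infty$, $X(n)$ has law $P(n)$ and $Y(n)=(n/m)^{1/2}X(n)$. A set $S\subseteq V$ witnesses a rainbow clique if $S$ induces a clique and one can assign to each pair $\{u,v\}\subseteq S$ an attribute in $S_u\cap S_v$ so that all assigned attributes are distinct; $G(n)$ contains a rainbow $K_4$ if some $4$-set is such a witness. *)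

From Stdlib Require Import Reals.
From mathcomp Require Import all_boot.

Set Implicit Arguments.
Unset Strict Implicit.
Unset Printing Implicit Defensive.

Local Open Scope R_scope.

(* A configuration of the random intersection graph G(n,m,P):
   vertex v in [n] = 'I_n gets the attribute set S_v, a subset of W = 'I_m. *)
Definition config (n m : nat) := {ffun 'I_n -> {set 'I_m}}.

Definition is_distr (m : nat) (P : nat -> R) : Prop :=
  (forall k, (k <= m)%N -> Rle 0 (P k)) /\
  \big[Rplus/0]_(0 <= k < m.+1) P k = 1.

(* Probability of a configuration: independent S_v with
   P(S_v = S) = P(|S|) / binom(m,|S|). *)
Definition cfg_weight (n m : nat) (P : nat -> R) (w : config n m) : R :=
  \big[Rmult/1]_(v : 'I_n) (P #|w v| / INR 'C(m, #|w v|)).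

Definition adj (n m : nat) (w : config n m) (u v : 'I_n) : bool :=
  (u != v) && (w u :&: w v != set0).

Definition rainbow_K4_witness (n m : nat) (w : config n m) (S : {set 'I_n}) : bool :=
  [&& #|S| == 4%N,
      [forall u in S, forall v in S, (u != v) ==> adj w u v] &
      [exists g : {ffun 'I_n * 'I_n -> 'I_m},
         [forall u in S, forall v in S, (u != v) ==>
            [&& g (u, v) == g (v, u),
                g (u, v) \in w u :&: w v &
                [forall u' in S, forall v' in S, (u' != v') ==>
                   (g (u, v) == g (u', v')) ==> ([set u; v] == [set u'; v'])]]]]].

Definition num_rainbow_K4 (n m : nat) (w : config n m) : nat :=
  #|[set S : {set 'I_n} | rainbow_K4_witness w S]|.

Definition has_rainbow_K4 (n m : nat) (w : config n m) : bool :=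
  [exists S : {set 'I_n}, rainbow_K4_witness w S].

Definition E_num_rainbow_K4 (n m : nat) (P : nat -> R) : R :=
  \big[Rplus/0]_(w : config n m) (cfg_weight P w * INR (num_rainbow_K4 w)).

Definition Pr_no_rainbow_K4 (n m : nat) (P : nat -> R) : R :=
  \big[Rplus/0]_(w : config n m)
     (if has_rainbow_K4 w then 0 else cfg_weight P w).

Definition Yval (n m k : nat) : R := (sqrt (INR n / INR m) * INR k).

Definition EY2 (n m : nat) (P : nat -> R) : R :=
  \big[Rplus/0]_(0 <= k < m.+1) (P k * (Yval n m k) ^ 2).

Definition PrY_ge (n m : nat) (P : nat -> R) (t : R) : R :=
  \big[Rplus/0]_(0 <= k < m.+1) (if Rle_dec t (Yval n m k) then P k else 0).

(* Fix a 4-set S and a vector kk of sizes |S_v| = k_v (v in S).  If S witnesses a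
   rainbow K4, its six pairs carry distinct attributes, so each v in S has a 3-set of
   labels inside S_v.  A uniform k-set contains a given 3-set with probability at most
   (k/m)^3; by independence and a union bound over the at most m^6 labellings,
     P(S witnesses, sizes kk) <= P(sizes kk) * min(1, z^3),   z = m^2 prod_v (k_v/m).
   As min(1, z^3) <= min(1, z) z^2 and z^2 = prod_v k_v^2/m, summing over kk yields
   c (E X^2/m)^4 whenever min(1, z) <= c on the admissible size vectors, and summing
   over the C(n, 4) <= n^4/4! sets S yields c (E Y^2)^4/4!.  With c = 1 this is the
   first claim.  With c = eps^4, restricting to sizes below the threshold Y < eps n^(1/2)
   and adding a union bound over vertices of large size, we get
     P(rainbow K4) <= n P(Y >= eps n^(1/2)) + eps^4 (E Y^2)^4 / 4!,
   which tends to 0.  The file develops in turn: real big operators, the probability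
   space of configurations, the superset bound, labellings of witnesses, the bound
   conditional on the size vector, the sums over size vectors and 4-sets, and the
   probability of a rainbow K4; the theorem comes last. *)

From Stdlib Require Import Reals Lra Lia.
From HB Require Import structures.
From mathcomp Require Import all_boot zify.
From Coquelicot Require Import Coquelicot.

Set Implicit Arguments.
Unset Strict Implicit.
Unset Printing Implicit Defensive.

Local Open Scope R_scope.

HB.instance Definition _ := Monoid.isComLaw.Build R 0 Rplus
  (fun a b c => esym (Rplus_assoc a b c)) Rplus_comm Rplus_0_l.
HB.instance Definition _ := Monoid.isComLaw.Build R 1 Rmult
  (fun a b c => esym (Rmult_assoc a b c)) Rmult_comm Rmult_1_l.
HB.instance Definition _ := Monoid.isMulLaw.Build R 0 Rmult Rmult_0_l Rmult_0_r.
HB.instance Definition _ := Monoid.isAddLaw.Build R Rmult Rplus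
  Rmult_plus_distr_r Rmult_plus_distr_l.

Definition ind (b : bool) : R := if b then 1 else 0.

Lemma ind_ge0 b : 0 <= ind b. Proof. by case: b; rewrite /ind; lra. Qed.
Lemma ind_le1 b : ind b <= 1. Proof. by case: b; rewrite /ind; lra. Qed.

Lemma INR_muln a b : INR (a * b)%N = INR a * INR b.
Proof. by rewrite mulnE mult_INR. Qed.

Lemma INR_expn a k : INR (a ^ k)%N = INR a ^ k.
Proof. by elim: k => [|k IH]; rewrite ?expn0 // expnS INR_muln IH. Qed.

Lemma INR_pos k : (0 < k)%N -> 0 < INR k.
Proof. by move=> /ltP; apply: lt_0_INR. Qed.

(* Ratios of naturals are nonnegative (with x / 0 = 0). *)
Lemma INR_ratio_ge0 a b : 0 <= INR a / INR b.
Proof.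
apply: Rmult_le_pos; first exact: pos_INR.
by case: (posnP b) => [->|b_gt0]; [rewrite Rinv_0; lra | apply/Rlt_le/Rinv_0_lt_compat/INR_pos].
Qed.

(* min(1, z^3) <= min(1, z) * z^2: an upper bound by both e and e z^3 is an upper
   bound by min(1, z) * e z^2. *)
Lemma le_min_cube x e z : 0 <= e -> 0 <= z -> x <= e -> x <= e * z ^ 3 ->
  x <= Rmin 1 z * (e * z ^ 2).
Proof.
move=> e_ge0 z_ge0 le_xe le_xez; rewrite /Rmin; case: Rle_dec => [le1z | /Rnot_le_lt ltz1].
  have : 1 <= z ^ 2 by simpl; nra.
  nra.
by apply: (Rle_trans _ _ _ le_xez); right; ring.
Qed.

Section RealBigOps.
Variable I : finType.
Implicit Types (A : pred I) (F G : I -> R).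

Lemma Rsum_le A F G : (forall i, A i -> F i <= G i) ->
  \big[Rplus/0]_(i | A i) F i <= \big[Rplus/0]_(i | A i) G i.
Proof. by move=> H; apply: (big_ind2 (fun x y => x <= y)) => // *; lra. Qed.

Lemma Rsum_ge0 A F : (forall i, A i -> 0 <= F i) -> 0 <= \big[Rplus/0]_(i | A i) F i.
Proof. by move=> H; apply: (big_ind (fun x => 0 <= x)) => // *; lra. Qed.

Lemma Rsum_ge_term A F i0 : A i0 -> (forall i, A i -> 0 <= F i) ->
  F i0 <= \big[Rplus/0]_(i | A i) F i.
Proof.
move=> Ai0 F_ge0; rewrite (bigD1 i0) //=.
have : 0 <= \big[Rplus/0]_(i | A i && (i != i0)) F i.
  by apply: Rsum_ge0 => i /andP[/F_ge0].
lra.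
Qed.

Lemma Rprod_ge0 A F : (forall i, A i -> 0 <= F i) -> 0 <= \big[Rmult/1]_(i | A i) F i.
Proof. by move=> H; apply: (big_ind (fun x => 0 <= x)) => // *; nra. Qed.

Lemma Rprod_le A F G : (forall i, A i -> 0 <= F i <= G i) ->
  \big[Rmult/1]_(i | A i) F i <= \big[Rmult/1]_(i | A i) G i.
Proof.
move=> H; suff: 0 <= \big[Rmult/1]_(i | A i) F i <= \big[Rmult/1]_(i | A i) G i by case.
by apply: (big_ind2 (fun x y => 0 <= x <= y)) => // *; nra.
Qed.

Lemma Rsum_const A c : \big[Rplus/0]_(i | A i) c = INR #|A| * c.
Proof.
rewrite big_const; elim: #|A| => [|k IH]; first by rewrite /=; lra.
by rewrite iterS IH S_INR; lra.
Qed.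

Lemma Rsum_mull A F c :
  \big[Rplus/0]_(i | A i) (c * F i) = c * \big[Rplus/0]_(i | A i) F i.
Proof. by rewrite big_distrr. Qed.

Lemma Rsum_mulr A F c :
  \big[Rplus/0]_(i | A i) (F i * c) = \big[Rplus/0]_(i | A i) F i * c.
Proof. by rewrite big_distrl. Qed.

Lemma Rprod_mul A F G :
  \big[Rmult/1]_(i | A i) (F i * G i) =
  \big[Rmult/1]_(i | A i) F i * \big[Rmult/1]_(i | A i) G i.
Proof. exact: big_split. Qed.

Lemma Rprod_const A c : \big[Rmult/1]_(i | A i) c = c ^ #|A|.
Proof. by rewrite big_const; elim: #|A| => [|k IH] //=; rewrite IH. Qed.

Lemma Rprod_pow A F k :
  \big[Rmult/1]_(i | A i) (F i ^ k) = (\big[Rmult/1]_(i | A i) F i) ^ k.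
Proof. by elim: k => [|k IH] /=; [rewrite big1 | rewrite big_split /= IH]. Qed.

Lemma Rprod_split_in A (a b c : I -> R) :
  \big[Rmult/1]_i (if A i then a i * b i else c i) =
  \big[Rmult/1]_i (if A i then a i else c i) * \big[Rmult/1]_(i | A i) b i.
Proof.
rewrite [in RHS](big_mkcond A) -big_split /=.
by apply: eq_bigr => i _; case: (A i); rewrite ?Rmult_1_r.
Qed.

Lemma ind_forall_in A (b : pred I) :
  ind [forall (i | A i), b i] = \big[Rmult/1]_i (if A i then ind (b i) else 1).
Proof.
case: (boolP [forall (i | A i), b i]) => [/forall_inP all_b | /forall_inPn[i Ai not_bi]].
  by rewrite /ind big1 // => i _; case: ifP => // /all_b ->.
have Ai' : A i := Ai.
by rewrite /ind (bigD1 i) //= Ai' (negbTE not_bi) Rmult_0_l.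
Qed.

Lemma INR_card A : INR #|A| = \big[Rplus/0]_i ind (A i).
Proof.
rewrite -sum1_card (big_morph INR plus_INR (erefl _)) big_mkcond.
by apply: eq_bigr => i _; rewrite /ind; case: ifP.
Qed.

End RealBigOps.

Lemma card_sets_of_size (T : finType) k :
  #|[pred A : {set T} | #|A| == k]| = 'C(#|T|, k).
Proof. by rewrite -card_draws cardsE. Qed.

Section ConfigurationSpace.
Variables (n m : nat) (P : nat -> R).

Definition set_weight (A : {set 'I_m}) : R := P #|A| / INR 'C(m, #|A|).

Definition expect (f : config n m -> R) : R :=
  \big[Rplus/0]_(w : config n m) (cfg_weight P w * f w).

Lemma card_set_le (A : {set 'I_m}) : (#|A| <= m)%N.
Proof. by rewrite -[X in (_ <= X)%N](card_ord m) max_card. Qed.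

Lemma sum_by_size (g : nat -> R) :
  \big[Rplus/0]_(A : {set 'I_m}) (set_weight A * g #|A|) =
  \big[Rplus/0]_(k < m.+1) (P k * g k).
Proof.
rewrite (partition_big (fun A : {set 'I_m} => inord #|A| : 'I_m.+1) predT) //=.
apply: eq_bigr => k _.
have sizeE (A : {set 'I_m}) : (inord #|A| == k :> 'I_m.+1) = (#|A| == k).
  by rewrite -(inj_eq val_inj) /= inordK // ltnS card_set_le.
rewrite (eq_bigl _ _ sizeE) (eq_bigr (fun _ => P k / INR 'C(m, k) * g k)); last first.
  by move=> A /eqP sizeA; rewrite /set_weight sizeA.
rewrite Rsum_const card_sets_of_size card_ord.
have : 0 < INR 'C(m, k) by apply: INR_pos; rewrite bin_gt0 -ltnS.
by move=> ?; field; lra.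
Qed.

Hypothesis HP : is_distr m P.

Lemma P_ge0 k : (k <= m)%N -> 0 <= P k.
Proof. by case: HP => P_ge0 _ /P_ge0. Qed.

Lemma set_weight_ge0 A : 0 <= set_weight A.
Proof.
apply: Rmult_le_pos; first exact/P_ge0/card_set_le.
by apply/Rlt_le/Rinv_0_lt_compat/INR_pos; rewrite bin_gt0 card_set_le.
Qed.

Lemma sum_set_weight : \big[Rplus/0]_(A : {set 'I_m}) set_weight A = 1.
Proof.
case: HP => _ <-; rewrite big_mkord.
under eq_bigr do rewrite -[set_weight _]Rmult_1_r.
by rewrite (sum_by_size (fun=> 1)); under eq_bigr do rewrite Rmult_1_r.
Qed.

Lemma cfg_weight_ge0 (w : config n m) : 0 <= cfg_weight P w.
Proof. by apply: Rprod_ge0 => v _; apply: set_weight_ge0. Qed.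

Lemma expect_prod (F : 'I_n -> {set 'I_m} -> R) :
  expect (fun w => \big[Rmult/1]_v F v (w v)) =
  \big[Rmult/1]_v \big[Rplus/0]_(A : {set 'I_m}) (set_weight A * F v A).
Proof. by rewrite bigA_distr_bigA; apply: eq_bigr => w _; rewrite -big_split. Qed.

Lemma sum_cfg_weight : \big[Rplus/0]_(w : config n m) cfg_weight P w = 1.
Proof.
have := expect_prod (fun _ _ => 1).
rewrite /expect (eq_bigr (fun w => cfg_weight P w)) => [->|w _]; last first.
  by rewrite big1 ?Rmult_1_r.
rewrite big1 // => v _; rewrite -[RHS]sum_set_weight.
by apply: eq_bigr => A _; rewrite Rmult_1_r.
Qed.

Lemma expect_const c : expect (fun=> c) = c.
Proof. by rewrite /expect Rsum_mulr sum_cfg_weight Rmult_1_l. Qed.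

Lemma expect_le f g : (forall w, f w <= g w) -> expect f <= expect g.
Proof.
move=> le_fg; apply: Rsum_le => w _.
by apply: Rmult_le_compat_l; [apply: cfg_weight_ge0 | apply: le_fg].
Qed.

Lemma expect_ge0 f : (forall w, 0 <= f w) -> 0 <= expect f.
Proof. by move=> f_ge0; rewrite -(expect_const 0); apply: expect_le. Qed.

Lemma expect_add f g : expect (fun w => f w + g w) = expect f + expect g.
Proof. by rewrite -big_split; apply: eq_bigr => w _ /=; ring. Qed.

Lemma expect_scale c f : expect (fun w => c * f w) = c * expect f.
Proof. by rewrite -Rsum_mull; apply: eq_bigr => w _; ring. Qed.

Lemma expect_ext f g : (forall w, f w = g w) -> expect f = expect g.
Proof. by move=> eq_fg; apply: eq_bigr => w _; rewrite eq_fg. Qed.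

Lemma expect_sum (I : finType) (A : pred I) (F : I -> config n m -> R) :
  expect (fun w => \big[Rplus/0]_(i | A i) F i w) = \big[Rplus/0]_(i | A i) expect (F i).
Proof.
by rewrite -exchange_big; apply: eq_bigr => w _; rewrite Rsum_mull.
Qed.

Lemma expect_size v (g : nat -> R) :
  expect (fun w => g #|w v|) = \big[Rplus/0]_(k < m.+1) (P k * g k).
Proof.
rewrite -sum_by_size.
transitivity (expect (fun w => \big[Rmult/1]_u (if u == v then g #|w u| else 1))).
  by apply: eq_bigr => w _; rewrite (bigD1 v) //= eqxx big1 ?Rmult_1_r // => u /negbTE ->.
rewrite (expect_prod (fun u A => if u == v then g #|A| else 1)) (bigD1 v) //=.
rewrite [X in _ * X]big1 => [|u /negbTE uv]; last first.
  by rewrite -[RHS]sum_set_weight; apply: eq_bigr => A _; rewrite uv Rmult_1_r.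
by rewrite Rmult_1_r; apply: eq_bigr => A _; rewrite eqxx.
Qed.

End ConfigurationSpace.

(* C(l, j) / C(l+3, j+3) = (j+1)(j+2)(j+3) / ((l+1)(l+2)(l+3)) <= ((j+3)/(l+3))^3. *)
Lemma binomial_shift3 l j : (j <= l)%N ->
  ('C(l, j) * l.+3 ^ 3 <= 'C(l.+3, j.+3) * j.+3 ^ 3)%N.
Proof.
move=> le_jl.
have E1 := mul_bin_diag l.+3 j.+2; have E2 := mul_bin_diag l.+2 j.+1.
have E3 := mul_bin_diag l.+1 j; simpl in E1, E2, E3.
move: E1 E2 E3.
set x := 'C(l, j); set y := 'C(l.+3, j.+3); set y2 := 'C(l.+2, j.+2).
set y1 := 'C(l.+1, j.+1) => E1 E2 E3.
have falling : (l.+3 * l.+2 * l.+1 * x = j.+3 * j.+2 * j.+1 * y)%N.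
  have -> : (l.+3 * l.+2 * l.+1 * x = l.+3 * (l.+2 * (l.+1 * x)))%N by lia.
  rewrite E3 (_ : l.+2 * (j.+1 * y1) = j.+1 * (l.+2 * y1))%N; last by lia.
  rewrite E2 (_ : l.+3 * (j.+1 * (j.+2 * y2)) = j.+1 * j.+2 * (l.+3 * y2))%N; last by lia.
  by rewrite E1; lia.
have ratio : (j.+2 * l.+3 * (j.+1 * l.+3) <= j.+3 * l.+2 * (j.+3 * l.+1))%N.
  by apply: leq_mul; nia.
rewrite -(@leq_pmul2l (l.+2 * l.+1)) //.
have -> : (l.+2 * l.+1 * (x * l.+3 ^ 3) = l.+3 * l.+2 * l.+1 * x * l.+3 ^ 2)%N by lia.
rewrite falling.
have -> : (j.+3 * j.+2 * j.+1 * y * l.+3 ^ 2 = j.+3 * y * (j.+2 * l.+3 * (j.+1 * l.+3)))%N.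
  by lia.
have -> : (l.+2 * l.+1 * (y * j.+3 ^ 3) = j.+3 * y * (j.+3 * l.+2 * (j.+3 * l.+1)))%N.
  by lia.
exact: leq_mul.
Qed.

(* The k-subsets of 'I_m containing a fixed 3-set T are the sets B :|: T with B a
   (k-3)-subset of ~: T; hence there are C(m-3, k-3) of them. *)
Lemma card_supersets m k (T : {set 'I_m}) : #|T| = 3%N -> (3 <= k)%N ->
  #|[set A : {set 'I_m} | (#|A| == k) && (T \subset A)]| = 'C(m - 3, k - 3).
Proof.
move=> cardT le3k.
pose U := [set B : {set 'I_m} | B \subset ~: T & #|B| == (k - 3)%N].
have cardU : #|U| = 'C(m - 3, k - 3).
  rewrite cards_draws; have := cardsC T; rewrite cardT card_ord => ?.
  by congr 'C(_, _); lia.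
have disjT (B : {set 'I_m}) : B \subset ~: T -> B :&: T = set0.
  by rewrite subsets_disjoint setCK => /disjoint_setI0.
have -> : [set A : {set 'I_m} | (#|A| == k) && (T \subset A)] = [set B :|: T | B in U].
  apply/setP => A; rewrite inE; apply/idP/imsetP.
  - case/andP => /eqP cardA sTA; exists (A :\: T).
      by rewrite inE subsetDr /= cardsD (setIidPr sTA) cardA cardT.
    apply/setP => x; rewrite !inE.
    by case: (boolP (x \in T)) => [/(subsetP sTA) -> | _]; rewrite ?orbT ?orbF.
  - case=> B; rewrite inE => /andP[sBT /eqP cardB] ->.
    rewrite subsetUr andbT cardsU cardB cardT disjT // cards0; apply/eqP; lia.
have recover (B : {set 'I_m}) : B :&: T = set0 -> (B :|: T) :\: T = B.
  by move=> dBT; rewrite setDUl setDv setU0; apply/setDidPl; rewrite -setI_eq0 dBT.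
rewrite card_in_imset // => B1 B2; rewrite !inE => /andP[/disjT dB1 _] /andP[/disjT dB2 _].
by move=> eqU; rewrite -(recover B1 dB1) eqU recover.
Qed.

Lemma card_supersets_le m k (T : {set 'I_m}) : #|T| = 3%N -> (k <= m)%N ->
  (#|[set A : {set 'I_m} | (#|A| == k) && (T \subset A)]| * m ^ 3 <= 'C(m, k) * k ^ 3)%N.
Proof.
move=> cardT le_km; have [lt_k3 | le3k] := ltnP k 3.
  rewrite (_ : #|_| = 0%N); first by rewrite mul0n.
  apply: eq_card0 => A; rewrite !inE.
  by apply/negP => /andP[/eqP cardA /subset_leq_card]; rewrite cardT cardA; lia.
rewrite card_supersets //.
have := @binomial_shift3 (m - 3) (k - 3) (leq_sub2r 3 le_km).
have e_m : (m - 3).+3 = m by lia.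
have e_k : (k - 3).+3 = k by lia.
by rewrite e_m e_k.
Qed.

Lemma prob_superset m (P : nat -> R) k (T : {set 'I_m}) :
  #|T| = 3%N -> (k <= m)%N -> 0 <= P k ->
  \big[Rplus/0]_(A : {set 'I_m}) (set_weight P A * (ind (#|A| == k) * ind (T \subset A)))
  <= P k * (INR k / INR m) ^ 3.
Proof.
move=> cardT le_km Pk_ge0.
have m_gt0 : (0 < m)%N by have := card_set_le T; rewrite cardT; lia.
rewrite (eq_bigr (fun A : {set 'I_m} =>
   if (#|A| == k) && (T \subset A) then P k / INR 'C(m, k) else 0)); last first.
  by move=> A _; rewrite /ind /set_weight; case: eqP => [->|_]; case: (T \subset A) => /=; lra.
rewrite -big_mkcond Rsum_const (eq_card (fun A => esym (in_set _ A))).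
have /leP/le_INR := card_supersets_le cardT le_km; rewrite !INR_muln.
set c := INR #|_|; have c_ge0 : 0 <= c by apply: pos_INR.
have Cpos : 0 < INR 'C(m, k) by apply: INR_pos; rewrite bin_gt0.
have mpos : 0 < INR m by apply: INR_pos.
move=> count_le; apply: (Rmult_le_reg_r (INR 'C(m, k) * INR m ^ 3)).
  by apply: Rmult_lt_0_compat => //; apply: pow_lt.
have -> : c * (P k / INR 'C(m, k)) * (INR 'C(m, k) * INR m ^ 3) = P k * (c * INR m ^ 3).
  by field; lra.
have -> : P k * (INR k / INR m) ^ 3 * (INR 'C(m, k) * INR m ^ 3) =
          P k * (INR 'C(m, k) * INR k ^ 3) by field; lra.
by apply: Rmult_le_compat_l => //=; lra.
Qed.

Section Labellings.
Variables (n m : nat).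
Implicit Types (S : {set 'I_n}) (w : config n m) (L : {ffun 'I_n * 'I_n -> 'I_m}).

Definition pairs_of S : {set 'I_n * 'I_n} :=
  [set p | (p.1 \in S) && (p.2 \in S) && (p.1 < p.2)%N].

Definition sorted_pair (u v : 'I_n) : 'I_n * 'I_n := if (u < v)%N then (u, v) else (v, u).

Definition labels_at L S v : {set 'I_m} := [set L (sorted_pair v u) | u in S :\ v].

Definition locally_rainbow S L : bool := [forall v in S, #|labels_at L S v| == 3%N].

(* A 4-set has C(4, 2) = 6 pairs: p |-> [set p.1; p.2] embeds them into the 2-subsets. *)
Lemma card_pairs_of S : #|S| = 4%N -> (#|pairs_of S| <= 6)%N.
Proof.
move=> cardS; rewrite -[6%N]/'C(4, 2) -cardS -cards_draws.
have <- : #|[set [set p.1; p.2] | p in pairs_of S]| = #|pairs_of S|.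
  apply: card_in_imset => -[a b] [c d]; rewrite !inE /= => /andP[_ lt_ab] /andP[_ lt_cd] eq2.
  have : a \in [set c; d] by rewrite -eq2 set21.
  have : b \in [set c; d] by rewrite -eq2 set22.
  have : c \in [set a; b] by rewrite eq2 set21.
  by rewrite !inE => /orP[]/eqP e1 /orP[]/eqP e2 /orP[]/eqP e3; subst; try done; lia.
apply/subset_leq_card/subsetP => _ /imsetP[[a b] + ->].
rewrite !inE /= => /andP[/andP[aS bS] lt_ab].
have neq_ab : a != b by apply: contraTneq lt_ab => ->; rewrite ltnn.
rewrite cards2 neq_ab eqxx andbT; apply/subsetP => x.
by rewrite !inE => /orP[]/eqP->.
Qed.

Lemma witnessP w S : rainbow_K4_witness w S ->
  #|S| = 4%N /\ exists g : {ffun 'I_n * 'I_n -> 'I_m}, forall u v, u \in S -> v \in S -> u != v ->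
   [/\ g (u, v) = g (v, u), g (u, v) \in w u :&: w v &
       forall u' v', u' \in S -> v' \in S -> u' != v' -> g (u, v) = g (u', v') ->
         [set u; v] = [set u'; v']].
Proof.
case/and3P => /eqP cardS _ /existsP[g /forall_inP gP]; split => //; exists g.
move=> u v uS vS neq_uv; have /forall_inP/(_ v vS) := gP u uS; rewrite neq_uv /=.
case/and3P => /eqP g_sym g_in /forall_inP g_inj; split => // u' v' u'S v'S neq_uv' eq_g.
by have /forall_inP/(_ v' v'S) := g_inj u' u'S; rewrite neq_uv' eq_g eqxx /= => /eqP.
Qed.

(* A witness needs attributes, so m > 0. *)
Lemma witness_m_gt0 w S : rainbow_K4_witness w S -> (0 < m)%N.
Proof.
case/witnessP => cardS [g _]; have /card_gt0P[u _] : (0 < #|S|)%N by rewrite cardS.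
by case: (g (u, u)) => x; apply: leq_ltn_trans.
Qed.

Lemma witness_labelling (y0 : 'I_m) w S : rainbow_K4_witness w S ->
  exists2 L, L \in pffun_on y0 (pairs_of S) setT &
    locally_rainbow S L && [forall v in S, labels_at L S v \subset w v].
Proof.
case/witnessP => cardS [g gP].
pose L := [ffun p => if p \in pairs_of S then g p else y0].
have L_sorted v u : v \in S -> u \in S -> u != v -> L (sorted_pair v u) = g (v, u).
  move=> vS uS neq_uv; rewrite /sorted_pair ffunE; case: ltnP => [lt_vu | le_uv].
    by rewrite inE /= vS uS lt_vu.
  have lt_uv : (u < v)%N by rewrite ltn_neqAle le_uv andbT -(inj_eq val_inj) /= in neq_uv *.
  by rewrite inE /= vS uS lt_uv; case: (gP u v uS vS neq_uv).
have labelsE v : v \in S -> labels_at L S v = [set g (v, u) | u in S :\ v].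
  by move=> vS; apply: eq_in_imset => u; rewrite !inE => /andP[? ?]; apply: L_sorted.
exists L.
  apply/pffun_onP; split=> [|p _]; last by rewrite inE.
  by apply/subsetP => p; rewrite inE ffunE; case: ifP => // _; rewrite eqxx.
apply/andP; split; apply/forall_inP => v vS; rewrite labelsE //.
  rewrite card_in_imset; first by have := cardsD1 v S; rewrite vS cardS add1n => -[<-].
  move=> u1 u2; rewrite !inE => /andP[neq_u1v u1S] /andP[neq_u2v u2S] eq_g.
  have neq_vu1 : v != u1 by rewrite eq_sym.
  have neq_vu2 : v != u2 by rewrite eq_sym.
  case: (gP v u1 vS u1S neq_vu1) => _ _ /(_ v u2 vS u2S neq_vu2 eq_g) /setP/(_ u1).
  by rewrite !inE eqxx orbT (negbTE neq_u1v) /= => /esym/eqP.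
apply/subsetP => x /imsetP[u]; rewrite !inE => /andP[neq_uv uS] ->.
by case: (gP v u vS uS); rewrite 1?eq_sym // inE => _ /andP[].
Qed.

End Labellings.

Section SizeConditioning.
Variables (n m : nat) (P : nat -> R).
Hypothesis HP : is_distr m P.
Implicit Types (S : {set 'I_n}) (w : config n m) (kk : {ffun 'I_n -> 'I_m.+1}).

(* The size vector kk prescribes |S_v| = kk v for v in S; off S it must vanish and
   constrains nothing, so every configuration matches exactly one size vector. *)
Definition size_match S (v : 'I_n) (k : nat) (A : {set 'I_m}) : R :=
  if v \in S then ind (#|A| == k) else ind (k == 0%N).

Definition sizes_match S kk w : R := \big[Rmult/1]_v size_match S v (kk v) (w v).

Definition sizes_prob S kk : R :=
  \big[Rmult/1]_v (if v \in S then P (kk v) else ind (nat_of_ord (kk v) == 0%N)).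

Definition zval S kk : R := INR m ^ 2 * \big[Rmult/1]_(v in S) (INR (kk v) / INR m).

(* The weight of kk in the expansion of (E X^2 / m)^4 over size vectors. *)
Definition moment_weight S kk : R :=
  \big[Rmult/1]_v
    (if v \in S then P (kk v) * (INR (kk v) ^ 2 / INR m) else ind (nat_of_ord (kk v) == 0%N)).

(* E X^2 / m, so that E Y^2 = n * moment2. *)
Definition moment2 : R := \big[Rplus/0]_(k < m.+1) (P k * (INR k ^ 2 / INR m)).

Lemma sizes_match_ge0 S kk w : 0 <= sizes_match S kk w.
Proof. by apply: Rprod_ge0 => v _; rewrite /size_match; case: ifP => _; apply: ind_ge0. Qed.

Lemma sizes_prob_ge0 S kk : 0 <= sizes_prob S kk.
Proof.
apply: Rprod_ge0 => v _; case: ifP => _; last exact: ind_ge0.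
by apply: (P_ge0 HP); rewrite -ltnS.
Qed.


Lemma zval_ge0 S kk : 0 <= zval S kk.
Proof.
apply: Rmult_le_pos; first by apply: pow_le; apply: pos_INR.
by apply: Rprod_ge0 => v _; apply: INR_ratio_ge0.
Qed.

Lemma sum_size_indicator (j : nat) : (j <= m)%N ->
  \big[Rplus/0]_(k < m.+1) ind (j == k) = 1.
Proof.
move=> le_jm; rewrite (bigD1 (inord j)) //= inordK // eqxx big1 => [|k]; first by rewrite /ind; lra.
by rewrite -(inj_eq val_inj) /= inordK // eq_sym => /negbTE ->.
Qed.

Lemma sum_sizes_match S w : \big[Rplus/0]_kk sizes_match S kk w = 1.
Proof.
transitivity (\big[Rmult/1]_v \big[Rplus/0]_(k < m.+1) size_match S v k (w v)).
  by rewrite bigA_distr_bigA.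
apply: big1 => v _; rewrite /size_match; case: (v \in S).
  exact/sum_size_indicator/card_set_le.
by rewrite -(sum_size_indicator (leq0n m)); apply: eq_bigr => k _; rewrite eq_sym.
Qed.

Lemma expect_sizes_match S kk : expect P (sizes_match S kk) = sizes_prob S kk.
Proof.
rewrite (expect_prod _ (fun v => size_match S v (kk v))); apply: eq_bigr => v _.
rewrite /size_match; case: ifP => _; last first.
  by rewrite Rsum_mulr (sum_set_weight HP) Rmult_1_l.
rewrite (sum_by_size _ P (fun j => ind (j == kk v))) (bigD1 (kk v)) //= eqxx big1 /ind.
  by rewrite Rplus_0_r Rmult_1_r.
by move=> k; rewrite -(inj_eq val_inj) => /negbTE ->; rewrite Rmult_0_r.
Qed.

Lemma moment_weight_ge0 S kk : 0 <= moment_weight S kk.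
Proof.
apply: Rprod_ge0 => v _; case: ifP => _; last exact: ind_ge0.
apply: Rmult_le_pos; first by apply: (P_ge0 HP); rewrite -ltnS.
rewrite (_ : INR (kk v) ^ 2 / INR m = INR (kk v) * (INR (kk v) / INR m)); last first.
  by rewrite /Rdiv; ring.
exact: Rmult_le_pos (pos_INR _) (INR_ratio_ge0 _ _).
Qed.

Lemma sizes_match_restrict S kk w (sm : pred nat) :
  sizes_match S kk w * ind [forall v in S, sm #|w v|] =
  sizes_match S kk w * ind [forall v in S, sm (kk v)].
Proof.
case: (boolP [forall v in S, #|w v| == kk v]) => [/forall_inP same | /forall_inPn[v vS differ]].
  by congr (_ * ind _); apply: eq_forallb_in => v /same /eqP ->.
by rewrite /sizes_match (bigD1 v) //= /size_match vS /ind (negbTE differ) !Rmult_0_l.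
Qed.

(* For a fixed locally rainbow labelling L: by independence, and since S_v contains
   the three labels at v with probability at most (|S_v|/m)^3. *)
Lemma expect_labelling S kk L : locally_rainbow S L ->
  expect P (fun w => sizes_match S kk w * ind [forall v in S, labels_at L S v \subset w v])
  <= sizes_prob S kk * (\big[Rmult/1]_(v in S) (INR (kk v) / INR m)) ^ 3.
Proof.
move=> /forall_inP three_labels.
pose F v A := size_match S v (kk v) A * (if v \in S then ind (labels_at L S v \subset A) else 1).
rewrite (@expect_ext _ _ _ _ (fun w => \big[Rmult/1]_v F v (w v))) => [|w]; last first.
  by rewrite ind_forall_in /sizes_match -big_split.
rewrite expect_prod -Rprod_pow /sizes_prob -Rprod_split_in.
apply: Rprod_le => v _; split.
  apply: Rsum_ge0 => A _; apply: Rmult_le_pos; first exact: set_weight_ge0.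
  by rewrite /F /size_match; case: (v \in S); apply: Rmult_le_pos; try apply: ind_ge0; lra.
rewrite /F /size_match; case: ifP => vS.
  apply: prob_superset; first exact/eqP/three_labels.
    by rewrite -ltnS.
  by apply: (P_ge0 HP); rewrite -ltnS.
by apply: Req_le; rewrite Rsum_mulr (sum_set_weight HP); ring.
Qed.

(* Union bound over the at most m^6 labellings of the six pairs of S. *)
Lemma expect_witness_union S kk : (0 < m)%N -> #|S| = 4%N ->
  expect P (fun w => ind (rainbow_K4_witness w S) * sizes_match S kk w)
  <= sizes_prob S kk * zval S kk ^ 3.
Proof.
move=> m_gt0 cardS; pose Ls := pffun_on (Ordinal m_gt0) (pairs_of S) setT.
pose p := \big[Rmult/1]_(v in S) (INR (kk v) / INR m).
pose F L w := ind (locally_rainbow S L) *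
  (sizes_match S kk w * ind [forall v in S, labels_at L S v \subset w v]).
have p_ge0 : 0 <= p by apply: Rprod_ge0 => v _; apply: INR_ratio_ge0.
have F_ge0 L w : 0 <= F L w.
  apply: Rmult_le_pos; first exact: ind_ge0.
  by apply: Rmult_le_pos; [apply: sizes_match_ge0 | apply: ind_ge0].
have cover w : ind (rainbow_K4_witness w S) * sizes_match S kk w <= \big[Rplus/0]_(L in Ls) F L w.
  case: (boolP (rainbow_K4_witness w S)) => [wit | _]; last first.
    by rewrite /ind Rmult_0_l; apply: Rsum_ge0 => L _.
  have [L LLs /andP[lr lab]] := witness_labelling (Ordinal m_gt0) wit.
  apply: Rle_trans (Rsum_ge_term (A := [in Ls]) LLs (fun L _ => F_ge0 L w)).
  by rewrite /F lr lab /ind; lra.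
apply: (Rle_trans _ _ _ (expect_le HP cover)); rewrite expect_sum.
apply: (Rle_trans _ (\big[Rplus/0]_(L in Ls) (sizes_prob S kk * p ^ 3))).
  apply: Rsum_le => L _; rewrite /F expect_scale.
  case: (boolP (locally_rainbow S L)) => [lr | _]; rewrite /ind.
    by rewrite Rmult_1_l; apply: expect_labelling.
  by rewrite Rmult_0_l; apply: Rmult_le_pos; [apply: sizes_prob_ge0 | apply: pow_le].
rewrite Rsum_const (eq_card (fun L => erefl (L \in Ls))) card_pffun_on cardsT card_ord.
rewrite INR_expn (_ : zval S kk ^ 3 = INR m ^ 6 * p ^ 3); last by rewrite /zval /p; ring.
have m_ge1 : 1 <= INR m by apply: (le_INR 1); apply/leP.
have : INR m ^ #|pairs_of S| <= INR m ^ 6 by apply: Rle_pow => //; apply/leP/card_pairs_of.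
have : 0 <= sizes_prob S kk * p ^ 3 by apply: Rmult_le_pos; [apply: sizes_prob_ge0 | apply: pow_le].
nra.
Qed.

Lemma zval_sq S kk : (0 < m)%N -> #|S| = 4%N ->
  zval S kk ^ 2 = \big[Rmult/1]_(v in S) (INR (kk v) ^ 2 / INR m).
Proof.
move=> m_gt0 cardS; have m_neq0 : INR m <> 0 by have := INR_pos m_gt0; lra.
rewrite (eq_bigr (fun v => INR m * (INR (kk v) / INR m) ^ 2)) => [|v _]; last by field.
rewrite Rprod_mul Rprod_const Rprod_pow /zval (eq_card (fun v => erefl (v \in S))) cardS.
by rewrite Rpow_mult_distr -pow_mult.
Qed.

Lemma moment_weightE S kk : (0 < m)%N -> #|S| = 4%N ->
  moment_weight S kk = sizes_prob S kk * zval S kk ^ 2.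
Proof. by move=> m_gt0 cardS; rewrite /moment_weight Rprod_split_in zval_sq. Qed.

Lemma expect_witness_sizes S kk : (0 < m)%N -> #|S| = 4%N ->
  expect P (fun w => ind (rainbow_K4_witness w S) * sizes_match S kk w)
  <= Rmin 1 (zval S kk) * moment_weight S kk.
Proof.
move=> m_gt0 cardS; rewrite moment_weightE //.
apply: le_min_cube; [exact: sizes_prob_ge0 | exact: zval_ge0 | | exact: expect_witness_union].
rewrite -expect_sizes_match; apply: (expect_le HP) => w.
by have := ind_le1 (rainbow_K4_witness w S); have := sizes_match_ge0 S kk w; nra.
Qed.

Lemma sum_moment_weight S : #|S| = 4%N -> \big[Rplus/0]_kk moment_weight S kk = moment2 ^ 4.
Proof.
move=> cardS.
transitivity (\big[Rmult/1]_v \big[Rplus/0]_(k < m.+1)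
   (if v \in S then P k * (INR k ^ 2 / INR m) else ind (nat_of_ord k == 0%N))).
  by rewrite bigA_distr_bigA.
rewrite (eq_bigr (fun v => if v \in S then moment2 else 1)) => [|v _]; last first.
  case: (v \in S) => //; rewrite -(sum_size_indicator (leq0n m)).
  by apply: eq_bigr => k _; rewrite eq_sym.
by rewrite -big_mkcond Rprod_const (eq_card (fun v => erefl (v \in S))) cardS.
Qed.

Lemma expect_witness_restricted S (sm : pred nat) c : (0 < m)%N -> #|S| = 4%N -> 0 <= c ->
  (forall kk, (forall v, v \in S -> sm (kk v)) -> Rmin 1 (zval S kk) <= c) ->
  expect P (fun w => ind (rainbow_K4_witness w S) * ind [forall v in S, sm #|w v|])
  <= c * moment2 ^ 4.
Proof.
move=> m_gt0 cardS c_ge0 small.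
rewrite (@expect_ext _ _ _ _ (fun w => \big[Rplus/0]_(kk : {ffun 'I_n -> 'I_m.+1})
    (ind [forall v in S, sm (kk v)] *
    (ind (rainbow_K4_witness w S) * sizes_match S kk w)))) => [|w]; last first.
  rewrite -[LHS]Rmult_1_r -(sum_sizes_match S w) -Rsum_mull; apply: eq_bigr => kk _.
  transitivity (ind (rainbow_K4_witness w S) *
    (sizes_match S kk w * ind [forall v in S, sm #|w v|])); first ring.
  by rewrite sizes_match_restrict; ring.
rewrite expect_sum -(sum_moment_weight cardS) -Rsum_mull; apply: Rsum_le => kk _.
have mw_ge0 := moment_weight_ge0 S kk.
rewrite expect_scale.
case: (boolP [forall v in S, sm (kk v)]) => [/forall_inP adm | _]; rewrite /ind.
  rewrite Rmult_1_l; apply: (Rle_trans _ _ _ (expect_witness_sizes kk m_gt0 cardS)).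
  by apply: Rmult_le_compat_r => //; apply: small.
by rewrite Rmult_0_l; apply: Rmult_le_pos.
Qed.

End SizeConditioning.

Lemma ffact_le_expn n k : (n ^_ k <= n ^ k)%N.
Proof. by elim: k => [|k IH] //; rewrite ffactnSr expnSr leq_mul // leq_subr. Qed.

Lemma binomial4_le n : INR 'C(n, 4) * INR 4`! <= INR n ^ 4.
Proof. by rewrite -INR_muln bin_ffact -INR_expn; apply/le_INR/leP/ffact_le_expn. Qed.

Section Totals.
Variables (n m : nat) (P : nat -> R).
Hypothesis HP : is_distr m P.
Implicit Types (S : {set 'I_n}) (w : config n m).

Lemma EY2E : EY2 n m P = INR n * moment2 m P.
Proof.
have ratio_ge0 : 0 <= INR n / INR m := INR_ratio_ge0 _ _.
rewrite /EY2 /moment2 big_mkord -Rsum_mull; apply: eq_bigr => k _.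
by rewrite /Yval Rpow_mult_distr pow2_sqrt //; rewrite /Rdiv; ring.
Qed.

Lemma EY2_ge0 : 0 <= EY2 n m P.
Proof.
rewrite /EY2 big_mkord; apply: Rsum_ge0 => k _.
by apply: Rmult_le_pos; [apply: (P_ge0 HP); rewrite -ltnS | apply: pow2_ge_0].
Qed.

Definition restricted_witnesses (sm : pred nat) w : R :=
  \big[Rplus/0]_S (ind (rainbow_K4_witness w S) * ind [forall v in S, sm #|w v|]).

(* The bound of expect_witness_restricted summed over the C(n, 4) <= n^4/4! 4-sets. *)
Lemma expect_restricted_witnesses (sm : pred nat) c : 0 <= c ->
  (forall S (kk : {ffun 'I_n -> 'I_m.+1}), (0 < m)%N -> #|S| = 4%N ->
     (forall v, v \in S -> sm (kk v)) -> Rmin 1 (zval S kk) <= c) ->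
  expect P (restricted_witnesses sm) <= c * (EY2 n m P ^ 4 / INR 4`!).
Proof.
move=> c_ge0 small; have bound_ge0 : 0 <= c * moment2 m P ^ 4.
  by apply: Rmult_le_pos => //; rewrite (_ : 4%N = (2 * 2)%N) // pow_mult; apply: pow2_ge_0.
rewrite /restricted_witnesses expect_sum.
apply: (Rle_trans _ (\big[Rplus/0]_(S : {set 'I_n}) (ind (#|S| == 4%N) * (c * moment2 m P ^ 4)))).
  apply: Rsum_le => S _.
  case: (boolP ((0 < m)%N && (#|S| == 4%N))) => [/andP[m_gt0 /eqP cardS] | not_admissible].
    rewrite cardS /ind Rmult_1_l; apply: expect_witness_restricted => // kk.
    exact: small.
  apply: (Rle_trans _ 0); last by apply: Rmult_le_pos => //; apply: ind_ge0.
  rewrite -(expect_const n HP 0); apply: (expect_le HP) => w.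
  case: (boolP (rainbow_K4_witness w S)) => [wit | _]; last by rewrite /ind Rmult_0_l; lra.
  by move: not_admissible; rewrite (witness_m_gt0 wit) (proj1 (witnessP wit)).
rewrite Rsum_mulr -INR_card card_sets_of_size card_ord EY2E.
have := binomial4_le n; have : 0 < INR 4`! by apply: INR_pos; rewrite fact_gt0.
move=> fact_gt0 C4_le; apply: (Rmult_le_reg_r (INR 4`!)) => //.
rewrite (_ : c * ((INR n * moment2 m P) ^ 4 / INR 4`!) * INR 4`! =
             (c * moment2 m P ^ 4) * INR n ^ 4); last by field; lra.
rewrite (Rmult_comm (INR _)) Rmult_assoc; apply: Rmult_le_compat_l => //.
Qed.

End Totals.

Section RainbowProbability.
Variables (n m : nat) (P : nat -> R).
Hypothesis HP : is_distr m P.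
Implicit Types (S : {set 'I_n}) (kk : {ffun 'I_n -> 'I_m.+1}) (w : config n m).

Lemma expect_num_rainbow :
  E_num_rainbow_K4 n m P = expect P (fun w => restricted_witnesses predT w).
Proof.
apply: eq_bigr => w _; congr (_ * _).
rewrite /num_rainbow_K4 (eq_card (fun S => in_set (rainbow_K4_witness w) S)) INR_card.
apply: eq_bigr => S _; rewrite (_ : [forall v in S, predT #|w v|]) ?Rmult_1_r //.
exact/forall_inP.
Qed.

Lemma expected_rainbow_K4 : E_num_rainbow_K4 n m P <= EY2 n m P ^ 4 / INR 4`!.
Proof.
rewrite expect_num_rainbow -[X in _ <= X]Rmult_1_l.
by apply: (expect_restricted_witnesses HP) => [|*]; [lra | apply: Rmin_l].
Qed.

Definition large (t : R) (k : nat) : bool := if Rle_dec t (Yval n m k) then true else false.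

Lemma prob_large v t : expect P (fun w => ind (large t #|w v|)) = PrY_ge n m P t.
Proof.
rewrite (expect_size HP v (fun k => ind (large t k))) /PrY_ge big_mkord.
apply: eq_bigr => k _.
by rewrite /large /ind; case: Rle_dec => ? /=; ring.
Qed.

Lemma small_density eps k : 0 < eps -> (0 < n)%N -> (0 < m)%N ->
  ~~ large (eps * sqrt (INR n)) k -> INR k ^ 2 / INR m <= eps ^ 2.
Proof.
move=> eps_gt0 n_gt0 m_gt0; rewrite /large; case: Rle_dec => // /Rnot_le_lt Y_lt _.
have n_pos := INR_pos n_gt0; have m_pos := INR_pos m_gt0.
have Y_ge0 : 0 <= Yval n m k by apply: Rmult_le_pos; [apply: sqrt_pos | apply: pos_INR].
have : Yval n m k ^ 2 < (eps * sqrt (INR n)) ^ 2 by simpl; nra.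
rewrite /Yval !Rpow_mult_distr !pow2_sqrt; [|lra | exact: INR_ratio_ge0].
move=> sq_lt; apply/Rlt_le/(Rmult_lt_reg_l (INR n)) => //.
by rewrite (_ : INR n * (INR k ^ 2 / INR m) = INR n / INR m * INR k ^ 2); [lra | field; lra].
Qed.

(* If the densities on S are below e^2, then z <= e^4, as z^2 is their product. *)
Lemma zval_le S kk e : (0 < m)%N -> #|S| = 4%N -> 0 <= e ->
  (forall v, v \in S -> INR (kk v) ^ 2 / INR m <= e ^ 2) -> zval S kk <= e ^ 4.
Proof.
move=> m_gt0 cardS e_ge0 small.
have : zval S kk ^ 2 <= (e ^ 4) ^ 2.
  rewrite zval_sq // -pow_mult (_ : (4 * 2 = 2 * 4)%coq_nat) // pow_mult.
  have -> : (e ^ 2) ^ 4 = \big[Rmult/1]_(v in S) e ^ 2.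
    by rewrite Rprod_const (eq_card (fun v => erefl (v \in S))) cardS.
  apply: Rprod_le => v vS; split; last exact: small.
  by rewrite (_ : INR (kk v) ^ 2 / INR m = INR (kk v) * (INR (kk v) / INR m));
    [apply: Rmult_le_pos (pos_INR _) (INR_ratio_ge0 _ _) | rewrite /Rdiv; ring].
have := zval_ge0 S kk; have : 0 <= e ^ 4 by apply: pow_le.
nra.
Qed.

Lemma rainbow_cover t w : ind (has_rainbow_K4 w) <=
  \big[Rplus/0]_v ind (large t #|w v|) + restricted_witnesses (fun k => ~~ large t k) w.
Proof.
set A := \big[Rplus/0]_v _; set B := restricted_witnesses _ w.
have A_ge0 : 0 <= A by apply: Rsum_ge0 => v _; apply: ind_ge0.
have B_ge0 : 0 <= B by apply: Rsum_ge0 => S _; apply: Rmult_le_pos; apply: ind_ge0.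
suff : has_rainbow_K4 w -> 1 <= A + B.
  by case: (has_rainbow_K4 w) => [/(_ isT)|_]; rewrite /ind; lra.
case/existsP => S wit.
case: (boolP [forall v in S, ~~ large t #|w v|]) => [all_small | /forall_inPn[v _]].
  suff : 1 <= B by lra.
  apply: Rle_trans (Rsum_ge_term (A := predT) (i0 := S) _ _) => //.
    by rewrite wit all_small /ind /=; lra.
  by move=> *; apply: Rmult_le_pos; apply: ind_ge0.
rewrite negbK => large_v; suff : 1 <= A by lra.
apply: Rle_trans (Rsum_ge_term (A := predT) (i0 := v) _ _) => //.
  by rewrite large_v /ind /=; lra.
by move=> *; apply: ind_ge0.
Qed.

Lemma prob_rainbow_K4 eps : 0 < eps ->
  expect P (fun w => ind (has_rainbow_K4 w))
  <= INR n * PrY_ge n m P (eps * sqrt (INR n)) + eps ^ 4 * (EY2 n m P ^ 4 / INR 4`!).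
Proof.
move=> eps_gt0; set t := eps * sqrt (INR n).
apply: (Rle_trans _ _ _ (expect_le HP (rainbow_cover t))).
rewrite expect_add expect_sum (eq_bigr (fun=> PrY_ge n m P t)) => [|v _]; last exact: prob_large.
rewrite Rsum_const card_ord; apply: Rplus_le_compat_l.
apply: (expect_restricted_witnesses HP) => [|S kk m_gt0 cardS small]; first by apply: pow_le; lra.
apply: Rle_trans (Rmin_r _ _) _; apply: zval_le => //; first lra.
move=> v vS; apply: small_density => //; last exact: small.
by rewrite -(card_ord n); apply: leq_trans (max_card S); rewrite cardS.
Qed.

Lemma prob_no_rainbow_K4 :
  Pr_no_rainbow_K4 n m P + expect P (fun w => ind (has_rainbow_K4 w)) = 1.
Proof.
rewrite -(expect_const n HP 1) /expect -big_split; apply: eq_bigr => w _ /=.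
by rewrite /ind; case: has_rainbow_K4; ring.
Qed.

End RainbowProbability.

Lemma is_lim_seq_pow (u : nat -> R) (l : R) k :
  is_lim_seq u l -> is_lim_seq (fun n => u n ^ k) (l ^ k).
Proof.
by move=> lim_u; elim: k => [|k IH] /=; [apply: is_lim_seq_const | apply: is_lim_seq_mult'].
Qed.

Lemma complement_lim_one (p a eps : nat -> R) K :
  (forall n, 0 <= p n <= a n + eps n ^ 4 * K) -> is_lim_seq a 0 -> is_lim_seq eps 0 ->
  is_lim_seq (fun n => 1 - p n) 1.
Proof.
move=> p_bounds lim_a lim_eps.
have lim_bound : is_lim_seq (fun n => a n + eps n ^ 4 * K) 0.
  have lim_epsK := is_lim_seq_scal_r _ K _ (@is_lim_seq_pow eps 0 4 lim_eps).
  by have := is_lim_seq_plus' _ _ _ _ lim_a lim_epsK; rewrite /= !Rmult_0_l Rplus_0_r.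
have lim_lower := is_lim_seq_minus' _ _ _ _ (is_lim_seq_const 1) lim_bound.
rewrite Rminus_0_r in lim_lower.
apply: (is_lim_seq_le_le _ _ (fun=> 1) _ _ lim_lower (is_lim_seq_const 1)) => n.
by have := p_bounds n; lra.
Qed.

Unset Implicit Arguments.
Set Strict Implicit.

Theorem mainTheorem16
  (m : nat -> nat) (P : nat -> nat -> R)
  (HP : forall n, is_distr (m n) (P n))
  (Hm : forall M : nat, exists N : nat, forall n : nat, (N <= n)%N -> (M <= m n)%N)
  (HY : exists C : R, forall n : nat, (EY2 n (m n) (P n) <= C)) :
  (forall n : nat,
     (E_num_rainbow_K4 n (m n) (P n) <= (EY2 n (m n) (P n)) ^ 4 / INR (4`!))) /\
  (exists C : R, forall n : nat, (E_num_rainbow_K4 n (m n) (P n) <= C)) /\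
  (forall eps : nat -> R,
     (forall n, (0 < eps n)) ->
     Un_cv eps 0 ->
     Un_cv (fun n => INR n * PrY_ge n (m n) (P n) (eps n * sqrt (INR n))) 0 ->
     Un_cv (fun n => Pr_no_rainbow_K4 n (m n) (P n)) 1).
Proof.
have first_moment n := expected_rainbow_K4 n (HP n).
have [C0 EY2_le] := HY; pose K := Rmax C0 0 ^ 4 / INR 4`!.
have moment_le n : EY2 n (m n) (P n) ^ 4 / INR 4`! <= K.
  apply: Rmult_le_compat_r; first by apply/Rlt_le/Rinv_0_lt_compat/INR_pos/fact_gt0.
  apply: pow_incr; split; first exact: (EY2_ge0 n (HP n)).
  exact: Rle_trans (EY2_le n) (Rmax_l _ _).
split=> //; split; first by exists K => n; apply: Rle_trans (first_moment n) (moment_le n).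
move=> eps eps_gt0 /is_lim_seq_Reals lim_eps /is_lim_seq_Reals lim_tail; apply/is_lim_seq_Reals.
pose p n := expect (P n) (fun w : config n (m n) => ind (has_rainbow_K4 w)).
apply: (is_lim_seq_ext (fun n => 1 - p n)) => [n|].
  by rewrite -(prob_no_rainbow_K4 n (HP n)) /p; ring.
apply: (@complement_lim_one p _ eps K _ lim_tail lim_eps) => n; split.
  exact: (expect_ge0 (HP n) (fun w => ind_ge0 _)).
apply: Rle_trans (prob_rainbow_K4 n (HP n) (eps_gt0 n)) _; apply: Rplus_le_compat_l.
by apply: Rmult_le_compat_l (moment_le n); apply/pow_le/Rlt_le.
Qed.
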